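(* Let $\mathcal{H}_1,\mathcal{H}_2$ be Hilbert spaces of finite dimensions $d_1,d_2$, let $\Lambda,\Xi\in\mathcal{O}(\mathcal{H}_1\to\mathcal{H}_2)$ be quantum channels and let $s>0$. Then $J_\Xi=\frac{J_\Lambda+s'J_\Theta}{1+s'}$ for some real $0<s'\le s$ and some channel $\Theta\in\mathcal{O}(\mathcal{H}_1\to\mathcal{H}_2)$ if and only if $S_m\!\left(\frac{1+s}{s}J_\Xi-\frac1sJ_\Lambda\right)\ge0$ for all $m=1,2,\dots,d_1d_2$.
   Context: $\mathcal{O}(\mathcal{H}_1\to\mathcal{H}_2)$ is the set of quantum channels from operators on $\mathcal{H}_1$ to operators on $\mathcal{H}_2$. The Choi operator of a linear map $\Lambda$ is $J_\Lambda=\sum_{i,j=1}^{d_1}|i\rangle\langle j|\otimes\Lambda(|i\rangle\langle j|)$. For a Hermitian operator $X$, define recursively $S_0(X)=1$ and $S_m(X)=\frac1m\sum_{l=1}^m(-1)^{l-1}\operatorname{tr}[X^l]\,S_{m-l}(X)$ for $m\ge1$. *)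

(* Complex numbers are modelled as R[i] for a real closed field R
   (mathcomp-real-closed's complex.v); R = the real numbers is a special case. *)
From HB Require Import structures.
From mathcomp Require Import all_boot all_order all_algebra.
From mathcomp Require Import complex mxtens.
Set Implicit Arguments. Unset Strict Implicit. Unset Printing Implicit Defensive.
Import Order.TTheory GRing.Theory Num.Theory.
Local Open Scope ring_scope.

Section QDefs.
Variable R : rcfType.
Local Notation C := R[i].

Definition adjmx m n (A : 'M[C]_(m, n)) : 'M[C]_(n, m) := (map_mx Num.conj A)^T.

Definition psdmx n (A : 'M[C]_n) : Prop :=
  adjmx A = A /\ forall v : 'cV[C]_n, 0 <= (adjmx v *m A *m v) 0 0.

(* the map id_k (x) L applied to a (k*d1)x(k*d1) matrix, by linear extension
   on the decomposition X = sum_{a,b} |a><b| (x) X_ab *)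
Definition ampl k d1 d2 (L : 'M[C]_d1 -> 'M[C]_d2) (X : 'M[C]_(k * d1))
  : 'M[C]_(k * d2) :=
  \sum_(a < k) \sum_(b < k)
    (delta_mx a b *t L (\matrix_(i, j) X (mxtens_index (a, i)) (mxtens_index (b, j)))).

Definition completely_positive d1 d2 (L : 'M[C]_d1 -> 'M[C]_d2) : Prop :=
  forall (k : nat) (X : 'M[C]_(k * d1)), psdmx X -> psdmx (ampl L X).

Definition trace_preserving d1 d2 (L : 'M[C]_d1 -> 'M[C]_d2) : Prop :=
  forall X : 'M[C]_d1, \tr (L X) = \tr X.

Definition channel d1 d2 (L : {linear 'M[C]_d1 -> 'M[C]_d2}) : Prop :=
  completely_positive L /\ trace_preserving L.

Definition choi d1 d2 (L : 'M[C]_d1 -> 'M[C]_d2) : 'M[C]_(d1 * d2) :=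
  \sum_(i < d1) \sum_(j < d1) (delta_mx i j *t L (delta_mx i j)).

(* matrix power (valid for any size n) *)
Definition mxpow n (X : 'M[C]_n) (l : nat) : 'M[C]_n := iter l (mulmx X) 1%:M.

Fixpoint Slist n (X : 'M[C]_n) (m : nat) : seq C :=
  match m with
  | 0 => [:: 1]
  | m'.+1 =>
      let s := Slist X m' in
      rcons s ((m'.+1)%:R^-1 *
        \sum_(l < m'.+1) ((-1) ^+ l * \tr (mxpow X l.+1) * nth 0 s (m' - l)))
  end.

Definition Spoly n (X : 'M[C]_n) (m : nat) : C := nth 0 (Slist X m) m.

End QDefs.

(* By Newton's identities S_m(X) is the m-th elementary symmetric function of
   the eigenvalues of X, so for Hermitian X the coefficients of
   prod_k (1 + lambda_k t) are the S_m(X); if they are all nonnegative, this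
   real-rooted polynomial has no positive root, i.e. no eigenvalue is negative.
   Hence the condition on the S_m says that X = ((1 + s) J_Xi - J_Lam) / s is
   positive semidefinite.  If J_Xi = (J_Lam + s' J_Theta) / (1 + s'), then
   X = ((s - s') / s) J_Xi + (s' / s) J_Theta is a nonnegative combination of
   Choi operators of completely positive maps.  Conversely, a positive
   semidefinite X whose (i, j) block has trace [i == j] (true here since Xi and
   Lam preserve traces) is the Choi operator of a channel Theta: its spectral
   decomposition X = sum_k d_k |v_k><v_k| yields Kraus operators for Theta.
   Then s' = s works. *)

From HB Require Import structures.
From mathcomp Require Import all_boot all_order all_algebra.
From mathcomp Require Import complex mxtens spectral.
From mathcomp Require Import ring.
Set Implicit Arguments. Unset Strict Implicit. Unset Printing Implicit Defensive.
Import Order.TTheory GRing.Theory Num.Theory.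
Local Open Scope ring_scope.

Section ElementarySymmetric.
Variable R : comNzRingType.

Definition lag (e : nat -> R) (j : nat) : R := if j is j'.+1 then e j' else 0.

Fixpoint elsym (s : seq R) (m : nat) : R :=
  if s is x :: s' then elsym s' m + x * lag (elsym s') m else (m == 0)%:R.

Definition powsum (s : seq R) (l : nat) : R := \sum_(x <- s) x ^+ l.

Lemma elsym0 s : elsym s 0 = 1.
Proof. by elim: s => [|x s IH] //=; rewrite IH mulr0 addr0. Qed.

Lemma elsym_gt_size s m : (size s < m)%N -> elsym s m = 0.
Proof.
elim: s m => [|x s IH] [|m] //= lt_sm.
by rewrite (IH m.+1) ?(IH m) ?mulr0 ?addr0 // ltnW.
Qed.

Lemma coef_prod_1addX s j : (\prod_(x <- s) (1 + x *: 'X))`_j = elsym s j.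
Proof.
elim: s j => [|x s IH] j; first by rewrite big_nil coef1.
rewrite big_cons mulrDl mul1r coefD -scalerAl coefZ coefXM IH.
by case: j => [|j] /=; rewrite ?IH.
Qed.

Lemma powsum_elsym_cons x s m :
  \sum_(l < m.+1) (-1) ^+ l * x ^+ l.+1 * elsym (x :: s) (m - l) = x * elsym s m.
Proof.
elim: m => [|m IH]; first by rewrite big_ord1 /= mulr0 addr0; ring.
rewrite big_ord_recl subn0.
have -> : \sum_(i < m.+1) (-1) ^+ bump 0 i * x ^+ (bump 0 i).+1
            * elsym (x :: s) (m.+1 - bump 0 i) = - (x * (x * elsym s m)).
  rewrite -IH mulr_sumr -sumrN; apply: eq_bigr => i _.
  rewrite /bump /= add1n subSS !exprS; ring.
rewrite /=; ring.
Qed.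

Lemma newton_elsym s m : m.+1%:R * elsym s m.+1 =
  \sum_(l < m.+1) (-1) ^+ l * powsum s l.+1 * elsym s (m - l).
Proof.
elim: s m => [|x s IH] m.
  rewrite /= mulr0; symmetry; apply: big1 => i _.
  by rewrite /powsum big_nil mulr0 mul0r.
have IHlag : \sum_(l < m.+1) (-1) ^+ l * powsum s l.+1 * lag (elsym s) (m - l)
             = m%:R * elsym s m.
  case: m => [|k]; first by rewrite big_ord1 /= mulr0 mul0r.
  rewrite big_ord_recr /= subnn mulr0 addr0 IH.
  by apply: eq_bigr => i _; rewrite subSn // -ltnS.
transitivity (\sum_(l < m.+1) (-1) ^+ l * powsum s l.+1 * elsym (x :: s) (m - l)
  + \sum_(l < m.+1) (-1) ^+ l * x ^+ l.+1 * elsym (x :: s) (m - l)); last first.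
  rewrite -big_split /=; apply: eq_bigr => i _.
  rewrite /powsum big_cons; ring.
rewrite powsum_elsym_cons /=.
under eq_bigr => i _ do rewrite mulrDr.
rewrite big_split /= -IH.
have -> : \sum_(i < m.+1) (-1) ^+ i * powsum s i.+1 * (x * lag (elsym s) (m - i))
   = x * \sum_(i < m.+1) (-1) ^+ i * powsum s i.+1 * lag (elsym s) (m - i).
  by rewrite mulr_sumr; apply: eq_bigr => i _; ring.
rewrite IHlag -natr1; ring.
Qed.

End ElementarySymmetric.

Section ElementarySymmetricSign.
Variable R : numFieldType.

Lemma elsym_ge0 (s : seq R) m : all (fun x => 0 <= x) s -> 0 <= elsym s m.
Proof.
elim: s m => [|x s IH] m /=; first by rewrite ler0n.
case/andP=> x_ge0 s_ge0; rewrite addr_ge0 ?IH // mulr_ge0 //.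
by case: m => //= m; apply: IH.
Qed.

(* A negative x would make -1/x a positive root of prod (1 + y 'X), whose
   coefficients are all nonnegative with constant term 1. *)
Lemma ge0_elsym_ge0 (s : seq R) : {in s, forall x, x \is Num.real} ->
  (forall m, (1 <= m <= size s)%N -> 0 <= elsym s m) ->
  {in s, forall x, 0 <= x}.
Proof.
move=> s_real coef_ge0 x xs; case: (real_ge0P (s_real x xs)) => // x_lt0.
pose p := \prod_(y <- s) (1 + y *: 'X); pose t := - x^-1.
have t_gt0 : 0 < t by rewrite oppr_gt0 invr_lt0.
have p_t : p.[t] = 0.
  rewrite horner_prod; apply/eqP; rewrite prodf_seq_eq0; apply/hasP.
  by exists x => //=; rewrite !hornerE mulrN mulfV ?subrr // ltr0_neq0.
have size_p : (size p <= (size s).+1)%N.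
  by apply/leq_sizeP => j lt_sj; rewrite coef_prod_1addX elsym_gt_size.
have := horner_coef_wide t size_p.
rewrite p_t big_ord_recl coef_prod_1addX elsym0 expr0 mulr1 => /esym/eqP.
rewrite gt_eqF //; apply: ltr_pwDl => //; apply: sumr_ge0 => i _.
by rewrite coef_prod_1addX mulr_ge0 ?exprn_ge0 ?(ltW t_gt0) // coef_ge0 // lift0 ltn_ord.
Qed.

End ElementarySymmetricSign.

Section NewtonSpoly.
Variable R : rcfType.
Local Notation C := R[i].

Lemma size_Slist n (X : 'M[C]_n) m : size (Slist X m) = m.+1.
Proof. by elim: m => [|m IH] //=; rewrite size_rcons IH. Qed.

Lemma nth_Slist n (X : 'M[C]_n) m j : (j <= m)%N -> nth 0 (Slist X m) j = Spoly X j.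
Proof.
elim: m => [|m IH]; first by rewrite leqn0 => /eqP ->.
rewrite leq_eqVlt => /orP[/eqP -> //|lt_jm].
by rewrite /= nth_rcons size_Slist lt_jm IH.
Qed.

Lemma SpolyS n (X : 'M[C]_n) m : Spoly X m.+1 =
  m.+1%:R^-1 * \sum_(l < m.+1) ((-1) ^+ l * \tr (mxpow X l.+1) * Spoly X (m - l)).
Proof.
rewrite /Spoly /= nth_rcons size_Slist ltnn eqxx; congr (_ * _).
by apply: eq_bigr => l _; rewrite nth_Slist // leq_subr.
Qed.

Lemma Spoly_elsym n (X : 'M[C]_n) (s : seq C) :
  (forall l, \tr (mxpow X l.+1) = powsum s l.+1) -> forall m, Spoly X m = elsym s m.
Proof.
move=> tr_pow m; elim/ltn_ind: m => [[|m]] IH; first by rewrite elsym0.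
rewrite SpolyS (eq_bigr (fun l : 'I_m.+1 =>
    (-1) ^+ l * powsum s l.+1 * elsym s (m - l))) => [|l _]; last first.
  by rewrite tr_pow IH // ltnS leq_subr.
by rewrite -newton_elsym mulKf // pnatr_eq0.
Qed.

End NewtonSpoly.

Section Adjoint.
Variable R : rcfType.
Local Notation C := R[i].

Lemma adjmxE m n (A : 'M[C]_(m, n)) i j : adjmx A i j = (A j i)^*.
Proof. by rewrite !mxE. Qed.

Lemma adjmx_trC m n (A : 'M[C]_(m, n)) : adjmx A = map_mx Num.conj A^T.
Proof. by rewrite /adjmx map_trmx. Qed.

Lemma adjmxK m n (A : 'M[C]_(m, n)) : adjmx (adjmx A) = A.
Proof. by apply/matrixP => i j; rewrite !adjmxE conjCK. Qed.

Lemma adjmxM m n p (A : 'M[C]_(m, n)) (B : 'M[C]_(n, p)) :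
  adjmx (A *m B) = adjmx B *m adjmx A.
Proof. by rewrite /adjmx map_mxM trmx_mul. Qed.

Lemma adjmxD m n (A B : 'M[C]_(m, n)) : adjmx (A + B) = adjmx A + adjmx B.
Proof. by apply/matrixP => i j; rewrite !mxE rmorphD. Qed.

Lemma adjmxN m n (A : 'M[C]_(m, n)) : adjmx (- A) = - adjmx A.
Proof. by apply/matrixP => i j; rewrite !mxE rmorphN. Qed.

Lemma adjmxZ m n a (A : 'M[C]_(m, n)) : adjmx (a *: A) = a^* *: adjmx A.
Proof. by apply/matrixP => i j; rewrite !mxE rmorphM. Qed.

Lemma adjmx_delta m n (i : 'I_m) (j : 'I_n) :
  adjmx (delta_mx i j : 'M[C]_(m, n)) = delta_mx j i.
Proof. by apply/matrixP => a b; rewrite !mxE rmorph_nat andbC. Qed.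

Lemma mulmx_adj_ge0 n (z : 'rV[C]_n) : 0 <= (z *m adjmx z) 0 0.
Proof. by rewrite mxE; apply: sumr_ge0 => j _; rewrite adjmxE mul_conjC_ge0. Qed.

Lemma psdmx0 n : psdmx (0 : 'M[C]_n).
Proof.
split; first by apply/matrixP => i j; rewrite !mxE conjC0.
by move=> v; rewrite mulmx0 mul0mx mxE.
Qed.

Lemma psdmxD n (A B : 'M[C]_n) : psdmx A -> psdmx B -> psdmx (A + B).
Proof.
move=> [hA qA] [hB qB]; split; first by rewrite adjmxD hA hB.
by move=> v; rewrite mulmxDr mulmxDl mxE addr_ge0.
Qed.

Lemma psdmxZ n a (A : 'M[C]_n) : 0 <= a -> psdmx A -> psdmx (a *: A).
Proof.
move=> a_ge0 [hA qA]; split; first by rewrite adjmxZ hA conj_Creal ?ger0_real.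
by move=> v; rewrite -scalemxAr -scalemxAl mxE mulr_ge0.
Qed.

Lemma psdmx_sum n I (r : seq I) (c : I -> C) (F : I -> 'M[C]_n) :
  (forall i, 0 <= c i) -> (forall i, psdmx (F i)) ->
  psdmx (\sum_(i <- r) c i *: F i).
Proof.
move=> c_ge0 psdF; elim: r => [|i r IH]; first by rewrite big_nil; apply: psdmx0.
by rewrite big_cons; apply: psdmxD => //; apply: psdmxZ.
Qed.

Lemma psdmx_congr m n (W : 'M[C]_(m, n)) (Y : 'M[C]_n) :
  psdmx Y -> psdmx (W *m Y *m adjmx W).
Proof.
move=> [hY qY]; split; first by rewrite !adjmxM adjmxK hY mulmxA.
by move=> v; have := qY (adjmx W *m v); rewrite adjmxM adjmxK !mulmxA.
Qed.

End Adjoint.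

Section HermitianSpectrum.
Variable R : rcfType.
Local Notation C := R[i].

Lemma hermitian_spectral n (X : 'M[C]_n) :
  let P := spectralmx X in let d := spectral_diag X in
  adjmx X = X ->
  [/\ X = adjmx P *m diag_mx d *m P, P *m adjmx P = 1%:M,
      adjmx P *m P = 1%:M & forall k, d 0 k \is Num.real].
Proof.
move=> P d hX; have herm_X : X \is hermsymmx.
  by apply/is_hermitianmxP; rewrite expr0 scale1r -adjmx_trC hX.
have adjP : adjmx P = invmx P.
  by rewrite adjmx_trC invmx_unitary ?spectral_unitarymx.
have PadjP : P *m adjmx P = 1%:M by rewrite adjP mulmxV ?spectral_unit.
split=> //; first by rewrite adjP; apply/orthomx_spectralP/hermitian_normalmx.
  exact: mulmx1C.
by move=> k; have /mxOverP := hermitian_spectral_diag_real herm_X; apply.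
Qed.

Section UnitaryDiagonal.
Variables (n : nat) (X P : 'M[C]_n) (d : 'rV[C]_n).
Hypotheses (defX : X = adjmx P *m diag_mx d *m P) (PadjP : P *m adjmx P = 1%:M)
  (adjPP : adjmx P *m P = 1%:M).

Lemma mxpow_diag l : mxpow X l = adjmx P *m diag_mx (\row_k (d 0 k ^+ l)) *m P.
Proof.
elim: l => [|l IH].
  have -> : \row_k (d 0 k ^+ 0) = const_mx 1 by apply/rowP => k; rewrite !mxE.
  by rewrite diag_const_mx mulmx1 adjPP.
rewrite /mxpow /= -/(mxpow X l) IH defX !mulmxA -[_ *m P *m adjmx P]mulmxA PadjP.
rewrite mulmx1 -[_ *m diag_mx d *m _]mulmxA mulmx_diag; congr (_ *m diag_mx _ *m _).
by apply/rowP => k; rewrite !mxE exprS.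
Qed.

Lemma tr_mxpow_diag l : \tr (mxpow X l) = \sum_k d 0 k ^+ l.
Proof.
rewrite mxpow_diag mxtrace_mulC mulmxA PadjP mul1mx mxtrace_diag.
by apply: eq_bigr => k _; rewrite mxE.
Qed.

Lemma psdmx_diag : psdmx X <-> forall k, 0 <= d 0 k.
Proof.
split=> [[_ qX] k|d_ge0].
  have := qX (adjmx P *m delta_mx k 0).
  rewrite adjmxM adjmxK adjmx_delta defX !mulmxA -[_ *m P *m adjmx P]mulmxA PadjP.
  by rewrite mulmx1 -(mulmxA _ P) PadjP mulmx1 -rowE -colE !mxE eqxx mulr1n.
split.
  rewrite defX !adjmxM adjmxK mulmxA; congr (_ *m _ *m _).
  apply/matrixP => i j; rewrite !mxE eq_sym.
  by case: eqP => [->|]; rewrite ?mulr0n ?conjC0 // !mulr1n conj_Creal ?ger0_real.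
move=> v; rewrite defX !mulmxA -(mulmxA _ _ P) -adjmxM -mulmxA -(mulmxA _ P v).
rewrite mulmxA mul_mx_diag !mxE; apply: sumr_ge0 => k _.
by rewrite !mxE mulrAC mulrC mulr_ge0 // mulrC mul_conjC_ge0.
Qed.

End UnitaryDiagonal.

Lemma psdmx_Spoly n (X : 'M[C]_n) : adjmx X = X ->
  (psdmx X <-> forall m, (1 <= m <= n)%N -> 0 <= Spoly X m).
Proof.
move=> /hermitian_spectral[defX PadjP adjPP d_real].
set d := spectral_diag X in defX d_real.
pose eigs := [seq d 0 k | k : 'I_n].
have Spoly_eigs m : Spoly X m = elsym eigs m.
  apply: Spoly_elsym => l.
  by rewrite (tr_mxpow_diag defX PadjP adjPP) /powsum big_map big_enum.
rewrite (psdmx_diag defX PadjP); split=> [d_ge0 m _|Spoly_ge0 k].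
  by rewrite Spoly_eigs elsym_ge0 //; apply/allP => _ /mapP[k _ ->].
apply: (@ge0_elsym_ge0 _ eigs); last exact: map_f (mem_enum _ k).
  by move=> _ /mapP[j _ ->]; apply: d_real.
by move=> m; rewrite size_map size_enum_ord -Spoly_eigs; apply: Spoly_ge0.
Qed.

End HermitianSpectrum.

Lemma sum_kronecker (V : nmodType) n (a : 'I_n) (F : 'I_n -> V) :
  \sum_(i < n) F i *+ (a == i) = F a.
Proof.
rewrite (bigD1 a) //= eqxx big1 ?addr0 // => i i_neq_a.
by rewrite eq_sym (negbTE i_neq_a).
Qed.

Section TensorBlocks.
Variable R : comNzRingType.

Lemma sum_mxtens m n (F : 'I_(m * n) -> R) :
  \sum_(r < m * n) F r = \sum_(a < m) \sum_(p < n) F (mxtens_index (a, p)).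
Proof.
rewrite pair_big /=; apply: reindex => /=.
exists (@mxtens_unindex m n) => [[a p] _|r _]; first by rewrite mxtens_indexK.
by rewrite -surjective_pairing mxtens_unindexK.
Qed.

Lemma mx_tensP m n m' n' (A B : 'M[R]_(m * n, m' * n')) :
  (forall a p b q, A (mxtens_index (a, p)) (mxtens_index (b, q)) =
                   B (mxtens_index (a, p)) (mxtens_index (b, q))) -> A = B.
Proof.
move=> eqAB; apply/matrixP => r c.
by case: (mxtens_indexP r) => a p; case: (mxtens_indexP c) => b q; apply: eqAB.
Qed.

Definition tens_block k l m n (X : 'M[R]_(k * m, l * n)) a b : 'M[R]_(m, n) :=
  \matrix_(i, j) X (mxtens_index (a, i)) (mxtens_index (b, j)).

Lemma tens_blockE k l m n (X : 'M[R]_(k * m, l * n)) a b i j :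
  tens_block X a b i j = X (mxtens_index (a, i)) (mxtens_index (b, j)).
Proof. exact: mxE. Qed.

Lemma eq_tens_block k m n (A B : 'M[R]_(k * m, k * n)) :
  (forall a b, tens_block A a b = tens_block B a b) -> A = B.
Proof.
move=> eqAB; apply: mx_tensP => a p b q.
by rewrite -!tens_blockE eqAB.
Qed.


Lemma tens_block_mul k l r m n p (A : 'M[R]_(k * m, l * n)) (B : 'M[R]_(l * n, r * p)) a c :
  tens_block (A *m B) a c = \sum_b tens_block A a b *m tens_block B b c.
Proof.
apply/matrixP => i j; rewrite !mxE summxE sum_mxtens.
by apply: eq_bigr => b _; rewrite mxE; apply: eq_bigr => q _; rewrite !mxE.
Qed.

Lemma tens_block_tens k l m n (A : 'M[R]_(k, l)) (B : 'M[R]_(m, n)) a b :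
  tens_block (A *t B) a b = A a b *: B.
Proof. by apply/matrixP => i j; rewrite tens_blockE tensmxE mxE. Qed.

Lemma tens_block_sum_delta k d (F : 'I_k -> 'I_k -> 'M[R]_d) a b :
  tens_block (\sum_(a' < k) \sum_(b' < k) (delta_mx a' b' *t F a' b')) a b = F a b.
Proof.
apply/matrixP => p q; rewrite mxE summxE -(sum_kronecker a (fun a' => F a' b p q)).
apply: eq_bigr => a' _; rewrite summxE.
rewrite -(sum_kronecker b (fun b' => F a' b' p q *+ (a == a'))).
apply: eq_bigr => b' _; rewrite -tens_blockE tens_block_tens !mxE.
by rewrite -mulrnA mulnb mulr_natl.
Qed.

Lemma tens_block_tens1_mull k m n p (K : 'M[R]_(m, n)) (Y : 'M[R]_(k * n, k * p)) a c :
  tens_block ((1%:M *t K) *m Y) a c = K *m tens_block Y a c.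
Proof.
rewrite tens_block_mul -(sum_kronecker a (fun e => K *m tens_block Y e c)).
by apply: eq_bigr => e _; rewrite tens_block_tens mxE -scalemxAl scaler_nat.
Qed.

Lemma tens_block_tens1_mulr k m n p (K : 'M[R]_(n, p)) (Y : 'M[R]_(k * m, k * n)) a c :
  tens_block (Y *m (1%:M *t K)) a c = tens_block Y a c *m K.
Proof.
rewrite tens_block_mul -(sum_kronecker c (fun e => tens_block Y a e *m K)).
apply: eq_bigr => e _; rewrite tens_block_tens mxE -scalemxAr scaler_nat.
by rewrite eq_sym.
Qed.

Lemma mxtrace_delta n (i j : 'I_n) : \tr (delta_mx i j : 'M[R]_n) = (i == j)%:R.
Proof.
rewrite /mxtrace (bigD1 i) //= big1 => [|k k_neq_i]; first by rewrite mxE eqxx addr0.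
by rewrite mxE (negbTE k_neq_i).
Qed.

End TensorBlocks.

Section Choi.
Variable R : rcfType.
Local Notation C := R[i].

Lemma tens_block_choi d1 d2 (L : 'M[C]_d1 -> 'M[C]_d2) a b :
  tens_block (choi L) a b = L (delta_mx a b).
Proof. exact: tens_block_sum_delta. Qed.

Lemma tens_block_ampl k d1 d2 (L : 'M[C]_d1 -> 'M[C]_d2) (X : 'M[C]_(k * d1)) a b :
  tens_block (ampl L X) a b = L (tens_block X a b).
Proof. exact: tens_block_sum_delta. Qed.

(* J_L is (id (x) L) applied to the positive rank-one matrix w w^H, where
   w = sum_i |i>|i>. *)
Lemma choi_psdmx d1 d2 (L : 'M[C]_d1 -> 'M[C]_d2) :
  completely_positive L -> psdmx (choi L).
Proof.
move=> cpL; pose w : 'cV[C]_(d1 * d1) :=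
  \col_r ((mxtens_unindex r).1 == (mxtens_unindex r).2)%:R.
have -> : choi L = ampl L (w *m adjmx w).
  apply: eq_tens_block => a b; rewrite tens_block_choi tens_block_ampl.
  congr L; apply/matrixP => i j.
  rewrite !mxE big_ord1 !mxE !mxtens_indexK /= rmorph_nat -natrM mulnb.
  by rewrite [i == a]eq_sym [j == b]eq_sym.
apply: cpL; split=> [|v]; first by rewrite adjmxM adjmxK.
by rewrite mulmxA -mulmxA -[adjmx w *m v]adjmxK adjmxM adjmxK mulmx_adj_ge0.
Qed.

End Choi.

Definition choi_inv (R : comNzRingType) d1 d2 (X : 'M[R]_(d1 * d2)) (M : 'M[R]_d1)
  : 'M[R]_d2 := \sum_(i < d1) \sum_(j < d1) M i j *: tens_block X i j.

Lemma choi_inv_is_linear (R : comNzRingType) d1 d2 (X : 'M[R]_(d1 * d2)) :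
  linear (choi_inv X).
Proof.
move=> a M N; rewrite /choi_inv scaler_sumr -big_split; apply: eq_bigr => i _.
rewrite scaler_sumr -big_split; apply: eq_bigr => j _.
by rewrite !mxE scalerDl scalerA.
Qed.

HB.instance Definition _ (R : comNzRingType) d1 d2 (X : 'M[R]_(d1 * d2)) :=
  GRing.isLinear.Build R 'M[R]_d1 'M[R]_d2 *:%R (choi_inv X) (choi_inv_is_linear X).

Lemma choi_inv_delta (R : comNzRingType) d1 d2 (X : 'M[R]_(d1 * d2)) a b :
  choi_inv X (delta_mx a b) = tens_block X a b.
Proof.
rewrite /choi_inv -(sum_kronecker a (fun i => tens_block X i b)).
apply: eq_bigr => i _; rewrite -(sum_kronecker b (fun j => tens_block X i j *+ (a == i))).
apply: eq_bigr => j _; rewrite mxE.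
by rewrite -mulrnA mulnb scaler_nat [i == a]eq_sym [j == b]eq_sym.
Qed.


Section ChoiInverse.
Variable R : rcfType.
Local Notation C := R[i].

Lemma choi_invK d1 d2 (X : 'M[C]_(d1 * d2)) : choi (choi_inv X) = X.
Proof. by apply: eq_tens_block => a b; rewrite tens_block_choi choi_inv_delta. Qed.

Lemma choi_inv_tp d1 d2 (X : 'M[C]_(d1 * d2)) :
  (forall i j, \tr (tens_block X i j) = (i == j)%:R) -> trace_preserving (choi_inv X).
Proof.
move=> trX M; rewrite /choi_inv raddf_sum /= [RHS]/mxtrace; apply: eq_bigr => i _.
rewrite raddf_sum /= -[RHS](sum_kronecker i (fun j => M i j)).
by apply: eq_bigr => j _; rewrite linearZ /= trX mulr_natr.
Qed.

Lemma adjmx_tens1 m k n (K : 'M[C]_(m, n)) :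
  adjmx (1%:M *t K : 'M_(k * m, k * n)) = 1%:M *t adjmx K.
Proof.
apply: mx_tensP => a p b q.
by rewrite adjmxE !tensmxE !mxE rmorphM rmorph_nat eq_sym.
Qed.

Section Kraus.
Variables (d1 d2 : nat) (X P : 'M[C]_(d1 * d2)) (d : 'rV[C]_(d1 * d2)).
Hypothesis defX : X = adjmx P *m diag_mx d *m P.

Definition kraus k : 'M[C]_(d2, d1) := \matrix_(q, i) (P k (mxtens_index (i, q)))^*.

Lemma choi_inv_kraus M :
  choi_inv X M = \sum_k d 0 k *: (kraus k *m M *m adjmx (kraus k)).
Proof.
apply/matrixP => p q; rewrite summxE [RHS]summxE.
transitivity (\sum_i \sum_j \sum_k
  (M i j * (P k (mxtens_index (i, p)))^* * d 0 k * P k (mxtens_index (j, q)))).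
  apply: eq_bigr => i _; rewrite summxE; apply: eq_bigr => j _.
  rewrite !mxE defX !mxE mulr_sumr; apply: eq_bigr => k _.
  by rewrite mul_mx_diag !mxE; ring.
under eq_bigr do rewrite exchange_big /=.
rewrite exchange_big /=; apply: eq_bigr => k _.
rewrite exchange_big /= !mxE mulr_sumr; apply: eq_bigr => j _.
rewrite !mxE mulr_suml mulr_sumr; apply: eq_bigr => i _.
by rewrite !mxE conjCK; ring.
Qed.

Lemma choi_inv_cp : (forall k, 0 <= d 0 k) -> completely_positive (choi_inv X).
Proof.
move=> d_ge0 k Y psdY.
have -> : ampl (choi_inv X) Y = \sum_r d 0 r *:
    ((1%:M *t kraus r) *m Y *m adjmx (1%:M *t kraus r)).
  apply: eq_tens_block => a b.
  rewrite tens_block_ampl choi_inv_kraus; apply/matrixP => p q.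
  rewrite tens_blockE !summxE; apply: eq_bigr => r _.
  rewrite [RHS]mxE -tens_blockE.
  by rewrite adjmx_tens1 tens_block_tens1_mulr tens_block_tens1_mull mxE.
by apply: psdmx_sum => // r; apply: psdmx_congr.
Qed.

End Kraus.
End ChoiInverse.

Section ChoiChannel.
Variable R : rcfType.
Local Notation C := R[i].

Lemma choi_inv_channel d1 d2 (X : 'M[C]_(d1 * d2)) :
  psdmx X -> (forall i j, \tr (tens_block X i j) = (i == j)%:R) ->
  channel (choi_inv X).
Proof.
move=> psdX trX; split; last exact: choi_inv_tp.
have hermX : adjmx X = X by case: psdX.
have [defX PadjP _ _] := hermitian_spectral hermX.
exact/(choi_inv_cp defX)/(psdmx_diag defX PadjP).
Qed.

Lemma tr_tens_block_choi d1 d2 (L : 'M[C]_d1 -> 'M[C]_d2) i j :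
  trace_preserving L -> \tr (tens_block (choi L) i j) = (i == j)%:R.
Proof. by move=> tpL; rewrite tens_block_choi tpL mxtrace_delta. Qed.

End ChoiChannel.

Theorem lemma14 (R : rcfType) (d1 d2 : nat)
    (Lam Xi : {linear 'M[R[i]]_d1 -> 'M[R[i]]_d2})
    (hLam : channel Lam) (hXi : channel Xi)
    (s : R[i]) (hs : 0 < s) :
  (exists (s' : R[i]) (Theta : {linear 'M[R[i]]_d1 -> 'M[R[i]]_d2}),
      [/\ 0 < s', s' <= s, channel Theta &
          choi Xi = (1 + s')^-1 *: (choi Lam + s' *: choi Theta)])
  <->
  (forall m : nat, (1 <= m <= d1 * d2)%N ->
     0 <= Spoly ((1 + s) / s *: choi Xi - s^-1 *: choi Lam) m).
Proof.
have s_neq0 : s != 0 by rewrite gt_eqF.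
have s1_neq0 : 1 + s != 0 by rewrite gt_eqF ?addr_gt0.
set X := (1 + s) / s *: choi Xi - s^-1 *: choi Lam.
have [[adjXi _] [adjLam _]] := (choi_psdmx hXi.1, choi_psdmx hLam.1).
have hermX : adjmx X = X.
  by rewrite adjmxD adjmxN !adjmxZ adjXi adjLam !conj_Creal // ger0_real // ltW
    ?invr_gt0 ?divr_gt0 ?addr_gt0.
rewrite -(psdmx_Spoly hermX); split=> [[s' [Th [s'_gt0 s'_le_s chTh defXi]]]|psdX].
  have s'1_neq0 : 1 + s' != 0 by rewrite gt_eqF ?addr_gt0.
  have -> : X = (s - s') / s *: choi Xi + s' / s *: choi Th.
    by rewrite /X defXi; apply/matrixP => i j; rewrite !mxE; field; rewrite s_neq0 s'1_neq0.
  apply: psdmxD; apply: psdmxZ; rewrite ?divr_ge0 ?subr_ge0 ?(ltW s'_gt0) ?(ltW hs) //.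
    exact: choi_psdmx hXi.1.
  exact: choi_psdmx chTh.1.
exists s, (choi_inv X); split=> //.
  apply: choi_inv_channel => // i j.
  have -> : tens_block X i j = (1 + s) / s *: tens_block (choi Xi) i j
                               - s^-1 *: tens_block (choi Lam) i j.
    by apply/matrixP => p q; rewrite !mxE.
  rewrite raddfB /= !mxtraceZ (tr_tens_block_choi i j hXi.2).
  by rewrite (tr_tens_block_choi i j hLam.2); field.
rewrite (choi_invK X) /X; apply/matrixP => i j; rewrite !mxE; field.
by rewrite s_neq0 s1_neq0.
Qed.
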